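(* Let $X$ be a random variable with finite support in $(l,r)$ (with $l,r$ finite), such that $(\theta,1-\theta)\in D_X$ for all $\theta\in(0,1)$. Then $$G_X(\theta,1-\theta)\le[r-\mathbb{E}(X)]^\theta[\mathbb{E}(X)-l]^{1-\theta}\qquad\text{for all }\theta\in(0,1).$$
   Context: For a random variable $X$ with CDF $F$ and survival function $\overline F=1-F$, with $l=\inf\{x:F(x)>0\}$, $r=\sup\{x:\overline F(x)>0\}$, the CIGF is $G_X(\alpha,\beta)=\int_l^r [F(x)]^\alpha[\overline F(x)]^\beta\,dx$ on $D_X=\{(\alpha,\beta)\in\mathbb{R}^2: G_X(\alpha,\beta)<\infty\}$. *)

From HB Require Import structures.
From mathcomp Require Import all_boot all_order all_algebra.
From mathcomp Require Import all_classical all_reals all_analysis.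
Set Implicit Arguments. Unset Strict Implicit. Unset Printing Implicit Defensive.
Import Order.TTheory GRing.Theory Num.Theory.
Import numFieldNormedType.Exports.
Local Open Scope classical_set_scope.
Local Open Scope ring_scope.

Definition cdfRV d (T : measurableType d) (R : realType) (P : probability T R)
  (X : {RV P >-> R}) (x : R) : R :=
  fine (P [set w | X w <= x]).

Definition survRV d (T : measurableType d) (R : realType) (P : probability T R)
  (X : {RV P >-> R}) (x : R) : R := 1 - cdfRV X x.

Definition lsupp d (T : measurableType d) (R : realType) (P : probability T R)
  (X : {RV P >-> R}) : R := inf [set x | 0 < cdfRV X x].

Definition rsupp d (T : measurableType d) (R : realType) (P : probability T R)
  (X : {RV P >-> R}) : R := sup [set x | 0 < survRV X x].

Definition CIGF d (T : measurableType d) (R : realType) (P : probability T R)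
  (X : {RV P >-> R}) (a b : R) : \bar R :=
  (\int[lebesgue_measure]_(x in `[lsupp X, rsupp X])
     ((cdfRV X x) `^ a * (survRV X x) `^ b)%:E)%E.

From HB Require Import structures.
From mathcomp Require Import all_boot all_order all_algebra.
From mathcomp Require Import all_classical all_reals all_analysis.
From mathcomp Require Import lra measurable_realfun.
Import Order.TTheory GRing.Theory Num.Theory.
Import numFieldNormedType.Exports.
Local Open Scope classical_set_scope.
Local Open Scope ring_scope.

(** Write F for the distribution function and S = 1 - F for the survival
   function of X, with l, r the ends of the support.  Hölder's inequality with
   exponents 1/θ and 1/(1-θ) bounds the CIGF by
   (∫_l^r F)^θ (∫_l^r S)^(1-θ).  Because F vanishes left of l and S vanishes
   right of r, the tail formula E X = ∫_0^∞ S - ∫_{-∞}^0 F collapses to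
   E X = l + ∫_l^r S, and F + S = 1 then gives ∫_l^r F = r - E X. *)

Section hoelder_powR.
Context d (T : measurableType d) (R : realType).
Variable mu : {measure set T -> \bar R}.
Variable D : set T.
Hypothesis mD : measurable D.

Lemma Lnorm_powR_restrict (h : T -> R) (s : R) : 0 < s ->
  (forall x, D x -> 0 <= h x) -> mu.-integrable D (EFin \o h) ->
  Lnorm mu (s^-1)%:E (EFin \o (fun x => (h \_ D) x `^ s)) =
  ((\int[mu]_(x in D) h x) `^ s)%:E.
Proof.
move=> s0 h0 inth; rewrite unlock /= invrK -poweR_EFin fineK; last first.
  exact: integrable_fin_num.
congr poweR; rewrite [RHS]integral_mkcond; apply: eq_integral => x _.
rewrite !patchE; case: ifPn => [/set_mem xD|_]; last first.
  by rewrite powR0 ?gt_eqF// normr0 powR0 ?invr_neq0 ?gt_eqF.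
by rewrite ger0_norm ?powR_ge0// -powRrM mulfV ?gt_eqF// powRr1 ?h0.
Qed.

Lemma measurable_powR_restrict (h : T -> R) (s : R) :
  mu.-integrable D (EFin \o h) ->
  measurable_fun setT (fun x => (h \_ D) x `^ s).
Proof.
move=> /integrableP[/measurable_EFinP mh _].
apply: (measurableT_comp (measurable_powR _)).
exact/(measurable_restrictT _ mD).
Qed.

Lemma integral_powR_mul_le (f g : T -> R) (t : R) : 0 < t < 1 ->
  (forall x, D x -> 0 <= f x) -> (forall x, D x -> 0 <= g x) ->
  mu.-integrable D (EFin \o f) -> mu.-integrable D (EFin \o g) ->
  (\int[mu]_(x in D) (f x `^ t * g x `^ (1 - t))%:E <=
   ((\int[mu]_(x in D) f x) `^ t * (\int[mu]_(x in D) g x) `^ (1 - t))%:E)%E.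
Proof.
move=> /andP[t0 t1] f0 g0 intf intg.
have t'0 : 0 < 1 - t by rewrite subr_gt0.
have := hoelder mu (p := t^-1) (q := (1 - t)^-1)
  (measurable_powR_restrict _ t intf) (measurable_powR_restrict _ (1 - t) intg).
rewrite !invr_gt0 !invrK subrKC => /(_ t0 t'0 erefl).
rewrite !Lnorm_powR_restrict // -EFinM.
apply: le_trans; rewrite Lnorm1 [leLHS]integral_mkcond le_eqVlt.
apply/predU1P; left; apply: eq_integral => x _.
rewrite /patch /=; case: ifPn => // _.
  by rewrite ger0_norm// mulr_ge0// powR_ge0.
by rewrite !powR0 ?gt_eqF// mul0r normr0.
Qed.

End hoelder_powR.

Lemma eq_integral_subset d (T : measurableType d) (R : realType)
    (mu : {measure set T -> \bar R}) (A B : set T) (f : T -> \bar R) :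
  A `<=` B -> (forall x, B x -> ~ A x -> f x = 0%E) ->
  (\int[mu]_(x in B) f x = \int[mu]_(x in A) f x)%E.
Proof.
move=> AB f0; rewrite integral_mkcond [RHS]integral_mkcond.
apply: eq_integral => x _.
rewrite !patchE; case: ifPn => [/set_mem Bx|Bx]; case: ifPn => // Ax.
- by rewrite f0// => /mem_set; rewrite (negbTE Ax).
- by move/set_mem/AB/mem_set: Ax; rewrite (negbTE Bx).
Qed.

Section lebesgue_itv.
Context {R : realType}.
Local Notation mu := (@lebesgue_measure R).
Implicit Types (x y z : R).

Lemma lebesgue_measure_itv_lty x y b0 b1 :
  (mu [set` Interval (BSide b0 x) (BSide b1 y)] < +oo)%E.
Proof. by rewrite lebesgue_measure_itv; case: ifP => _; rewrite ?ltry. Qed.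

Lemma Rintegral1_itv x y b0 b1 : x <= y ->
  \int[mu]_(z in [set` Interval (BSide b0 x) (BSide b1 y)]) 1 = y - x.
Proof.
move=> xy; rewrite Rintegral_cst// mul1r.
apply: etrans (f_equal fine (lebesgue_measure_itv _)) _ => /=.
by rewrite lte_fin; case: ltgtP xy => // <- _; rewrite subrr.
Qed.

Lemma integrable_itv_unit_bounded (f : R -> R) x y b0 b1 :
  measurable_fun setT f -> (forall z, 0 <= f z <= 1) ->
  mu.-integrable [set` Interval (BSide b0 x) (BSide b1 y)] (EFin \o f).
Proof.
move=> mf f01; apply: measurable_bounded_integrable => //.
- exact: lebesgue_measure_itv_lty.
- exact: measurable_funTS.
- exists 1; split => // M M1 z _ /=; have /andP[f0 f1] := f01 z.
  by rewrite ger0_norm// (le_trans f1)// ltW.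
Qed.

Lemma Rintegral_itv_split (f : R -> R) x y z : x <= y -> y <= z ->
  mu.-integrable `[x, z] (EFin \o f) ->
  \int[mu]_(t in `[x, z]) f t =
  \int[mu]_(t in `[x, y[) f t + \int[mu]_(t in `[y, z]) f t.
Proof.
move=> xy yz intf; rewrite (@itv_bndbnd_setU _ _ _ (BLeft y)) ?bnd_simp//.
rewrite Rintegral_setU//; first by rewrite -itv_bndbnd_setU ?bnd_simp.
apply/disj_setPS => t [/=]; rewrite !in_itv/= => /andP[_ ty] /andP[].
by rewrite leNgt ty.
Qed.

End lebesgue_itv.

Section cdfRV_survRV.
Context {d} {T : measurableType d} {R : realType} {P : probability T R}
  (X : {RV P >-> R}).
Local Notation F := (cdfRV X).
Local Notation S := (survRV X).
Local Notation mu := (@lebesgue_measure R).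

Lemma EFin_cdfRV x : (F x)%:E = cdf X x.
Proof.
rewrite /cdfRV.
have -> : [set w | X w <= x] = X @^-1` `]-oo, x].
  by apply/seteqP; split => w /=; rewrite in_itv.
by rewrite fineK// fin_num_measure//; exact: measurable_funPTI.
Qed.

Lemma EFin_survRV x : (S x)%:E = ccdf X x.
Proof. by rewrite ccdf_1_cdf -EFin_cdfRV. Qed.

Lemma cdfRV_ge0 x : 0 <= F x.
Proof. by rewrite -lee_fin EFin_cdfRV cdf_ge0. Qed.

Lemma cdfRV_le1 x : F x <= 1.
Proof. by rewrite -lee_fin EFin_cdfRV cdf_le1. Qed.

Lemma cdfRV_add_survRV x : F x + S x = 1.
Proof. by rewrite /survRV addrC subrK. Qed.

Lemma survRV_ge0 x : 0 <= S x.
Proof. by rewrite /survRV subr_ge0 cdfRV_le1. Qed.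

Lemma survRV_le1 x : S x <= 1.
Proof. by rewrite /survRV lerBlDr lerDl cdfRV_ge0. Qed.

Lemma measurable_cdfRV : measurable_fun setT F.
Proof.
apply: measurable_realfun.nondecreasing_measurable => // x y xy.
by rewrite -lee_fin !EFin_cdfRV cdf_nondecreasing.
Qed.

Lemma measurable_survRV : measurable_fun setT S.
Proof. by apply: measurable_funB => //; exact: measurable_cdfRV. Qed.

(* Unlike the library's [expectation_cdf_ccdf], no integrability of X is
   assumed: both sides live in \bar R. *)
Lemma expectation_survRV_cdfRV : ('E_P[X] =
  \int[mu]_(x in `[0%R, +oo[) (S x)%:E -
  \int[mu]_(x in `]-oo, 0%R[) (F x)%:E)%E.
Proof.
rewrite expectation_def integralE funerpos funerneg.
rewrite -[X in (X - _)%E]expectation_def ge0_expectation_ccdf; last first.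
  by move=> ?; exact: funrpos_ge0.
have -> : (\int[P]_w (EFin \o X^\-%R) w = - 'E_P[- X^\-%R])%E.
  rewrite expectation_def.
  transitivity (- \int[P]_w - (X^\-%R w)%:E)%E; last first.
    by congr (- _)%E; apply: eq_integral => w _; rewrite /= EFinN.
  by rewrite integral_ge0N ?oppeK// => w _; rewrite lee_fin funrneg_ge0.
rewrite le0_expectation_cdf/=; last by move=> ?; rewrite oppr_le0 funrneg_ge0.
rewrite oppeK; congr (_ - _)%E; apply: eq_integral => x /[!inE]/=.
  rewrite in_itv/= andbT => x0; rewrite EFin_survRV; congr (P _).
  apply/seteqP; split => w /=;
    by rewrite !in_itv/= !andbT /funrpos lt_max [(x < 0)%R]ltNge x0 orbF.
rewrite in_itv/= => x0; rewrite EFin_cdfRV; congr (P _).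
apply/seteqP; split => w /=;
  by rewrite !in_itv/= /funrneg lerNl le_max lerN2 oppr_le0 [(0 <= x)%R]leNgt
            x0 orbF.
Qed.

Lemma integrable_cdfRV x y b0 b1 :
  mu.-integrable [set` Interval (BSide b0 x) (BSide b1 y)] (EFin \o F).
Proof.
apply: integrable_itv_unit_bounded; first exact: measurable_cdfRV.
by move=> z; rewrite cdfRV_ge0 cdfRV_le1.
Qed.

Lemma integrable_survRV x y b0 b1 :
  mu.-integrable [set` Interval (BSide b0 x) (BSide b1 y)] (EFin \o S).
Proof.
apply: integrable_itv_unit_bounded; first exact: measurable_survRV.
by move=> z; rewrite survRV_ge0 survRV_le1.
Qed.

Lemma Rintegral_cdfRV_itv x y b0 b1 : x <= y ->
  \int[mu]_(z in [set` Interval (BSide b0 x) (BSide b1 y)]) F z =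
  y - x - \int[mu]_(z in [set` Interval (BSide b0 x) (BSide b1 y)]) S z.
Proof.
move=> xy; rewrite -(Rintegral1_itv _ _ b0 b1 xy) -RintegralB//; last 2 first.
- by apply: integrable_itv_unit_bounded => // z; rewrite lexx ler01.
- exact: integrable_survRV.
by apply: eq_Rintegral => z _; rewrite /survRV opprB addrC subrK.
Qed.

End cdfRV_survRV.

Section support.
Context {d} {T : measurableType d} {R : realType} {P : probability T R}
  {X : {RV P >-> R}}.
Local Notation F := (cdfRV X).
Local Notation S := (survRV X).
Local Notation l := (lsupp X).
Local Notation r := (rsupp X).
Local Notation mu := (@lebesgue_measure R).
Hypothesis hl : has_lbound [set x | 0 < F x].
Hypothesis hr : has_ubound [set x | 0 < S x].

Lemma cdfRV_lt_lsupp x : x < l -> F x = 0.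
Proof.
move=> xl; apply/eqP; rewrite eq_le cdfRV_ge0 andbT leNgt.
by apply: contraTN xl => Fx; rewrite -leNgt; exact: ge_inf.
Qed.

Lemma survRV_lt_lsupp x : x < l -> S x = 1.
Proof. by move=> /cdfRV_lt_lsupp Fx; rewrite /survRV Fx subr0. Qed.

Lemma survRV_gt_rsupp x : r < x -> S x = 0.
Proof.
move=> rx; apply/eqP; rewrite eq_le survRV_ge0 andbT leNgt.
by apply: contraTN rx => Sx; rewrite -leNgt; exact: ub_le_sup.
Qed.

Lemma lsupp_le_rsupp : l <= r.
Proof.
rewrite leNgt; apply/negP => rl; have := cdfRV_add_survRV X ((l + r) / 2).
by rewrite cdfRV_lt_lsupp ?survRV_gt_rsupp ?addr0; try lra.
Qed.

Lemma expectation_lsupp_survRV :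
  ('E_P[X] = (l + \int[mu]_(x in `[l, r]) S x)%:E)%E.
Proof.
(* [a, b] contains both 0 and the support, so the two tails of the expectation
   become integrals over [a, 0[ and [0, b]. *)
pose a := Num.min l 0; pose b := Num.max r 0.
have al : a <= l by rewrite ge_min lexx.
have a0 : a <= 0 by rewrite ge_min lexx orbT.
have rb : r <= b by rewrite le_max lexx.
have b0 : 0 <= b by rewrite le_max lexx orbT.
clearbody a b.
have lr := lsupp_le_rsupp.
have S_pos : (\int[mu]_(x in `[0%R, +oo[) (S x)%:E =
               (\int[mu]_(x in `[0, b]) S x)%:E)%E.
  rewrite /Rintegral fineK; last first.
    exact: integrable_fin_num (integrable_survRV _ _ _ _ _).
  apply: eq_integral_subset.
  - by apply: subset_itvl; rewrite bnd_simp.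
  - move=> x; rewrite /= !in_itv/= andbT => x0 /negP; rewrite x0 -ltNge => bx.
    by rewrite survRV_gt_rsupp//; exact: le_lt_trans bx.
have F_neg : (\int[mu]_(x in `]-oo, 0%R[) (F x)%:E =
               (\int[mu]_(x in `[a, 0[) F x)%:E)%E.
  rewrite /Rintegral fineK; last first.
    exact: integrable_fin_num (integrable_cdfRV _ _ _ _ _).
  apply: eq_integral_subset.
  - by apply: subset_itvr; rewrite bnd_simp.
  - move=> x; rewrite /= !in_itv/= => x0 /negP; rewrite x0 andbT -ltNge => xa.
    by rewrite cdfRV_lt_lsupp//; exact: lt_le_trans al.
rewrite expectation_survRV_cdfRV S_pos F_neg -EFinB; congr EFin.
rewrite Rintegral_cdfRV_itv//.
have split0 := Rintegral_itv_split _ _ _ _ a0 b0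
  (integrable_survRV X a b true false).
have splitl := Rintegral_itv_split _ _ _ _ al (le_trans lr rb)
  (integrable_survRV X a b true false).
have left_l : \int[mu]_(x in `[a, l[) S x = l - a.
  rewrite -(Rintegral1_itv _ _ true true al); apply: eq_Rintegral => x.
  by rewrite inE/= in_itv/= => /andP[_ xl]; rewrite survRV_lt_lsupp.
have right_r : \int[mu]_(x in `[l, b]) S x = \int[mu]_(x in `[l, r]) S x.
  congr fine; apply: eq_integral_subset.
    by apply: subset_itvl; rewrite bnd_simp.
  move=> x; rewrite /= !in_itv/= => /andP[lx _] /negP; rewrite lx -ltNge => rx.
  by rewrite survRV_gt_rsupp.
rewrite sub0r -opprD opprK addrCA (addrC (\int[mu]_(x in `[0, b]) S x)).
by rewrite -split0 splitl left_l right_r addrA subrKC.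
Qed.

Lemma Rintegral_survRV_supp :
  \int[mu]_(x in `[l, r]) S x = fine 'E_P[X] - l.
Proof. by rewrite expectation_lsupp_survRV /= addrC addKr. Qed.

Lemma Rintegral_cdfRV_supp :
  \int[mu]_(x in `[l, r]) F x = r - fine 'E_P[X].
Proof.
rewrite Rintegral_cdfRV_itv ?lsupp_le_rsupp// Rintegral_survRV_supp.
by rewrite opprB addrA subrK.
Qed.

End support.

Theorem proposition7 (d : measure_display) (T : measurableType d) (R : realType)
  (P : probability T R) (X : {RV P >-> R}) :
  has_lbound [set x : R | (0 < cdfRV X x)%R] ->
  has_ubound [set x : R | (0 < survRV X x)%R] ->
  (forall theta : R, 0 < theta < 1 -> (CIGF X theta (1 - theta) < +oo)%E) ->
  forall theta : R, 0 < theta < 1 ->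
    (CIGF X theta (1 - theta) <=
     ((rsupp X - fine 'E_P[X]) `^ theta *
      (fine 'E_P[X] - lsupp X) `^ (1 - theta))%:E)%E.
Proof.
move=> hl hr _ t t01.
rewrite -(Rintegral_cdfRV_supp hl hr) -(Rintegral_survRV_supp hl hr).
apply: integral_powR_mul_le => //.
- by move=> x _; exact: cdfRV_ge0.
- by move=> x _; exact: survRV_ge0.
- exact: integrable_cdfRV.
- exact: integrable_survRV.
Qed.
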